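(* Let $G$ be a graph such that three or more edges join vertices $v$ and $w$. If $e$ is one of these edges, then $\lfloor \mathrm{sp}\rfloor(G\backslash e)=\lfloor \mathrm{sp}\rfloor(G)$.
   Context: All graphs are finite, have at least one vertex, have no loops, and may have multiple (parallel) edges. $G\backslash e$ denotes deletion of edge $e$. A unique shortest path is a shortest $u$–$v$ path $P$ such that every $u$–$v$ path with the same number of vertices is identical to $P$, where two paths with different edge sequences are different even if their vertex sequences agree; a single vertex is a unique shortest path. The parade number $\mathrm{usp}(G)$ is the largest number of vertices of a unique shortest path in $G$. The spectator number is $\mathrm{sp}(G)=|V(G)|-\mathrm{usp}(G)$. A minor of $H$ is any graph obtained from $H$ by a sequence of: deleting an isolated vertex, deleting an edge, contracting an edge that has no edge parallel to it. The spectator floor $\lfloor \mathrm{sp}\rfloor(G)$ is the minimum of $\mathrm{sp}(H)$ over all graphs $H$ of which $G$ is a minor. *)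

From mathcomp Require Import all_boot.
From mathcomp Require Import boolp.

Set Implicit Arguments.
Unset Strict Implicit.
Unset Printing Implicit Defensive.

(* A finite loopless multigraph: vertices 0 .. nv-1, edges are the entries
   of the list [edges]; the i-th edge is identified by its position i, so
   equal (unordered) entries are parallel edges. *)
Record graph := Graph { nv : nat; edges : seq (nat * nat) }.

Definition nrm (e : nat * nat) : nat * nat := (minn e.1 e.2, maxn e.1 e.2).

Definition emap (f : nat -> nat) (e : nat * nat) : nat * nat := (f e.1, f e.2).

Definition wf (G : graph) : Prop :=
  0 < nv G /\ all (fun e => [&& e.1 < nv G, e.2 < nv G & e.1 != e.2]) (edges G).

Definition edge_at (G : graph) (i : nat) : nat * nat := nth (0, 0) (edges G) i.

Definition rem_at (i : nat) (s : seq (nat * nat)) := take i s ++ drop i.+1 s.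

Definition del_edge (G : graph) (i : nat) : graph :=
  Graph (nv G) (rem_at i (edges G)).

(* relabelling after removing vertex v *)
Definition dn (v x : nat) : nat := if v < x then x.-1 else x.

Definition isolated (G : graph) (v : nat) : bool :=
  all (fun e => (e.1 != v) && (e.2 != v)) (edges G).

Definition del_vertex (G : graph) (v : nat) : graph :=
  Graph (nv G).-1 (map (emap (dn v)) (edges G)).

Definition mult (G : graph) (i : nat) : nat :=
  count (fun e => nrm e == nrm (edge_at G i)) (edges G).

Definition contract (G : graph) (i : nat) : graph :=
  let a := (edge_at G i).1 in let b := (edge_at G i).2 in
  Graph (nv G).-1
        (map (emap (fun x => dn b (if x == b then a else x))) (rem_at i (edges G))).

Inductive minor_step (H : graph) : graph -> Prop :=
| MS_del_vertex v : v < nv H -> 1 < nv H -> isolated H v ->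
    minor_step H (del_vertex H v)
| MS_del_edge i : i < size (edges H) -> minor_step H (del_edge H i)
| MS_contract i : i < size (edges H) -> mult H i = 1 ->
    minor_step H (contract H i).

Inductive minor_steps (H : graph) : graph -> Prop :=
| MSS_refl : minor_steps H H
| MSS_step K L : minor_steps H K -> minor_step K L -> minor_steps H L.

Definition iso (G1 G2 : graph) : Prop :=
  exists f : nat -> nat,
    [/\ nv G1 = nv G2,
        {in gtn (nv G1) &, injective f},
        {in gtn (nv G1), forall x, f x < nv G2} &
        perm_eq (map (fun e => nrm (emap f e)) (edges G1)) (map nrm (edges G2))].

Definition minor (G H : graph) : Prop :=
  exists K, minor_steps H K /\ iso K G.

(* walks: start vertex x, then a list of steps (edge index, next vertex) *)
Fixpoint walk (G : graph) (x : nat) (s : seq (nat * nat)) : bool :=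
  match s with
  | [::] => true
  | (j, y) :: s' =>
      [&& j < size (edges G), nrm (edge_at G j) == nrm (x, y) & walk G y s']
  end.

(* a path: a walk with pairwise distinct vertices; it has (size s).+1 vertices *)
Definition is_path (G : graph) (x : nat) (s : seq (nat * nat)) : bool :=
  [&& x < nv G, walk G x s & uniq (x :: map snd s)].

Definition path_end (x : nat) (s : seq (nat * nat)) : nat := last x (map snd s).

(* unique shortest path: every path with the same ends and at most as many
   vertices is identical (same vertex AND edge sequence) *)
Definition is_usp (G : graph) (x : nat) (s : seq (nat * nat)) : Prop :=
  is_path G x s /\
  forall t, is_path G x t -> path_end x t = path_end x s ->
    size t <= size s -> t = s.

Definition usp (G : graph) : nat :=
  \max_(k < (nv G).+1 | `[< exists x s, is_usp G x s /\ (size s).+1 = k >]) k.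

Definition sp (G : graph) : nat := nv G - usp G.

(* spectator floor: minimum of sp H over all graphs H having G as a minor.
   The disjunct (m == sp G) is redundant for well-formed G (G is a minor of
   itself); it only makes the minimum total. *)
Definition floor_pred (G : graph) : pred nat :=
  fun m => `[< exists H, wf H /\ minor G H /\ sp H = m >] || (m == sp G).

Lemma floor_ex (G : graph) : exists m, floor_pred G m.
Proof. by exists (sp G); rewrite /floor_pred eqxx orbT. Qed.

Definition sp_floor (G : graph) : nat := ex_minn (floor_ex G).

(* Deleting e cannot raise the floor, since every graph having G as a minor
   also has G \ e as a minor.  Conversely, let H have G \ e as a minor and let
   P be a longest unique shortest path of H, from p0 to p1, with n edges.  For
   a vertex u put hi u = d(p0, u) and lo u = n - d(u, p1); then lo u <= hi u,
   lo changes by at most one along an edge, and adding an edge xy to H keeps P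
   a unique shortest path whenever [lo x, hi x] and [lo y, hi y] meet.
   Following the minor operations from H down to G \ e, every vertex X of the
   minor has a branch set in H, and the union of the intervals of its vertices
   has no gaps (a contracted edge merges two intervals that touch).  If no
   vertex of the branch set of v has an interval meeting that of a vertex of
   the branch set of w, the two unions are disjoint, so each H-edge between
   the branch sets must be the edge of P crossing from one union to the other;
   there is only one.  Yet G \ e still has two parallel vw-edges, coming from
   distinct H-edges.  Hence some such x, y exist, and H + xy has G as a minor
   and no larger spectator number. *)

From mathcomp Require Import all_boot boolp zify.

Set Implicit Arguments.
Unset Strict Implicit.
Unset Printing Implicit Defensive.

Lemma size_rem_at i s : i < size s -> size (rem_at i s) = (size s).-1.
Proof. move=> hi; rewrite /rem_at size_cat size_take size_drop hi; lia. Qed.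

Lemma nth_rem_at i s k : i < size s -> nth (0, 0) (rem_at i s) k = nth (0, 0) s (bump i k).
Proof.
move=> hi; rewrite /rem_at nth_cat size_take hi /bump.
case: ltnP => hk; first by rewrite nth_take // add0n.
by rewrite nth_drop add1n; congr nth; lia.
Qed.

Lemma bump_ltn i k n : k < n.-1 -> bump i k < n.
Proof. by rewrite /bump; case: leqP; lia. Qed.

Lemma rem_at_rcons i s e : i < size s ->
  rem_at i (rcons s e) = rcons (rem_at i s) e.
Proof.
move=> hi; rewrite /rem_at -!cats1 take_cat hi drop_cat -catA.
case: ifP => // h; rewrite (drop_oversize (n := i.+1)); last lia.
by have -> : i.+1 - size s = 0 by lia.
Qed.

Lemma perm_rem_at (T : eqType) (F : nat * nat -> T) s j : j < size s ->
  perm_eq (map F s) (F (nth (0, 0) s j) :: map F (rem_at j s)).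
Proof.
move=> hj; rewrite -{1}(cat_take_drop j s) (drop_nth (0, 0) hj).
by rewrite /rem_at !map_cat /= -cat1s perm_catCA.
Qed.

Lemma count_gt1_nthP (T : Type) (x0 : T) (P : pred T) s :
  reflect (exists k1 k2, [/\ k1 < size s, k2 < size s, k1 != k2,
                             P (nth x0 s k1) & P (nth x0 s k2)])
          (1 < count P s).
Proof.
apply: (iffP idP).
  elim: s => [//|a s IH] /=; case Pa: (P a) => /=.
    rewrite add1n ltnS -has_count => /(has_nthP x0) [k hk Pk].
    by exists 0, k.+1.
  by rewrite add0n => /IH [k1 [k2 [h1 h2 h3 h4 h5]]]; exists k1.+1, k2.+1.
move=> [k1 [k2 []]]; elim: s k1 k2 => [//|a s IH] [|k1] [|k2] //= h1 h2 h12.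
- by move=> -> Pk; rewrite add1n ltnS -has_count; apply/(has_nthP x0); exists k2.
- by move=> Pk ->; rewrite add1n ltnS -has_count; apply/(has_nthP x0); exists k1.
- by move=> P1 P2; have := IH k1 k2 h1 h2 h12 P1 P2; lia.
Qed.

Lemma nrm_sym x y : nrm (x, y) = nrm (y, x).
Proof. by rewrite /nrm /= minnC maxnC. Qed.

Lemma nrm_eq p q p' q' : nrm (p, q) = nrm (p', q') ->
  (p = p' /\ q = q') \/ (p = q' /\ q = p').
Proof. rewrite /nrm /= => -[]; lia. Qed.

Definition add_edge (G : graph) (e : nat * nat) : graph :=
  Graph (nv G) (rcons (edges G) e).

Lemma edge_at_add_edge G e i : i < size (edges G) ->
  edge_at (add_edge G e) i = edge_at G i.
Proof. by move=> hi; rewrite /edge_at /= nth_rcons hi. Qed.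

Lemma edge_at_add_edge_last G e : edge_at (add_edge G e) (size (edges G)) = e.
Proof. by rewrite /edge_at /= nth_rcons ltnn eqxx. Qed.

Lemma wf_edge G k : wf G -> k < size (edges G) ->
  [/\ (edge_at G k).1 < nv G, (edge_at G k).2 < nv G & (edge_at G k).1 != (edge_at G k).2].
Proof. by move=> [_ /(all_nthP (0, 0)) h] /h /and3P. Qed.

Lemma wf_add_edge G x y : wf G -> x < nv G -> y < nv G -> x != y -> wf (add_edge G (x, y)).
Proof. by move=> [h0 ha] hx hy hxy; split => //=; rewrite all_rcons /= hx hy hxy. Qed.

Lemma wf_del_edge G i : wf G -> wf (del_edge G i).
Proof.
move=> [h0 /allP ha]; split => //=; apply/allP => e.
by rewrite mem_cat => /orP [/mem_take | /mem_drop] /ha.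
Qed.

Lemma path_end_cons x j y s : path_end x ((j, y) :: s) = path_end y s.
Proof. by []. Qed.

Lemma path_end_cat x s1 s2 : path_end x (s1 ++ s2) = path_end (path_end x s1) s2.
Proof. by rewrite /path_end map_cat last_cat. Qed.

Lemma walk_cat G x s1 s2 :
  walk G x (s1 ++ s2) = walk G x s1 && walk G (path_end x s1) s2.
Proof. by elim: s1 x => [//|[j y] s1 IH] x /=; rewrite IH !andbA. Qed.

Lemma walk_edge G x j y : j < size (edges G) -> nrm (edge_at G j) = nrm (x, y) ->
  walk G x [:: (j, y)].
Proof. by move=> hj he /=; rewrite hj he eqxx. Qed.

Lemma walk_shorten G x s : walk G x s -> exists t,
  [/\ walk G x t, path_end x t = path_end x s, uniq (x :: map snd t),
      size t <= size s & (size t = size s -> t = s)].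
Proof.
elim: s x => [|[j y] s IH] x; first by exists [::].
move=> /= /and3P [hj hn hw].
have [t [wt et ut st qt]] := IH y hw.
have [xy | nxy] := eqVneq x y.
  by subst y; exists t; split => // [|h]; lia.
case xt: (x \in map snd t); last first.
  exists ((j, y) :: t); split => /=; rewrite ?hj ?hn ?wt //.
  - by move: ut => /= ->; rewrite inE negb_or nxy xt.
  - by move=> [] /qt ->.
case/mapP: xt => -[a b] /splitPr [t1 t2] /= <- in wt ut et st qt *.
exists t2; split.
- by move: wt; rewrite walk_cat => /andP [_] /= /and3P [].
- by rewrite path_end_cons -et path_end_cat.
- by move: ut; rewrite /= map_cat cat_uniq /= => /andP [_] /and3P [_ _] /andP [-> ->].
- by move: st; rewrite size_cat /=; lia.
- by move: st; rewrite size_cat /= => h1 h2; lia.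
Qed.

Definition dist_pred G x y n : pred nat := fun k =>
  (k == n) || `[< exists t, [/\ walk G x t, path_end x t = y & size t = k] >].

Lemma dist_pred_ex G x y n : exists k, dist_pred G x y n k.
Proof. by exists n; rewrite /dist_pred eqxx. Qed.

Definition capped_dist G x y n : nat := ex_minn (dist_pred_ex G x y n).

Lemma capped_dist_le_cap G x y n : capped_dist G x y n <= n.
Proof. by rewrite /capped_dist; case: ex_minnP => k _; apply; rewrite /dist_pred eqxx. Qed.

Lemma capped_dist_le_walk G x t n : walk G x t ->
  capped_dist G x (path_end x t) n <= size t.
Proof.
move=> w; rewrite /capped_dist; case: ex_minnP => k _; apply.
by apply/orP; right; apply/asboolP; exists t.
Qed.

Lemma capped_distP G x y n : capped_dist G x y n < n ->
  exists t, [/\ walk G x t, path_end x t = y & size t = capped_dist G x y n].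
Proof.
rewrite /capped_dist; case: ex_minnP => k /orP [/eqP -> | /asboolP //] _.
by rewrite ltnn.
Qed.

Lemma capped_dist_edger G x n j p q : j < size (edges G) -> nrm (edge_at G j) = nrm (p, q) ->
  capped_dist G x q n <= (capped_dist G x p n).+1.
Proof.
move=> hj he; case: (ltnP (capped_dist G x p n) n) => h; last first.
  by have := capped_dist_le_cap G x q n; lia.
have [t [w ep <-]] := capped_distP h.
have w' : walk G x (t ++ [:: (j, q)]) by rewrite walk_cat w ep (walk_edge hj).
by have := capped_dist_le_walk n w'; rewrite path_end_cat ep size_cat addn1.
Qed.

Lemma capped_dist_edgel G y n j p q : j < size (edges G) -> nrm (edge_at G j) = nrm (p, q) ->
  capped_dist G p y n <= (capped_dist G q y n).+1.
Proof.
move=> hj he; case: (ltnP (capped_dist G q y n) n) => h; last first.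
  by have := capped_dist_le_cap G p y n; lia.
have [t [w <- <-]] := capped_distP h.
have w' : walk G p ((j, q) :: t) by rewrite /= hj he eqxx w.
exact: (capped_dist_le_walk n w').
Qed.

Notation uses_edge k := (fun p : nat * nat => p.1 == k).

Lemma walk_add_edge G e x t : walk G x t -> walk (add_edge G e) x t.
Proof.
elim: t x => [//|[j y] t IH] x /= /and3P [hj hn hw].
by rewrite size_rcons ltnS ltnW //= edge_at_add_edge // hn IH.
Qed.

Lemma walk_add_edge_inv G e x t : walk (add_edge G e) x t ->
  ~~ has (uses_edge (size (edges G))) t -> walk G x t.
Proof.
elim: t x => [//|[j y] t IH] x /= /and3P [hj hn hw].
rewrite negb_or => /andP [hjn hh].
have hj' : j < size (edges G) by move: hj; rewrite size_rcons ltnS leq_eqVlt (negbTE hjn).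
by rewrite hj' -(edge_at_add_edge e hj') hn IH.
Qed.

Lemma path_add_edge_split G e x t :
  walk (add_edge G e) x t -> uniq (x :: map snd t) -> has (uses_edge (size (edges G))) t ->
  exists t1 z t2, [/\ t = t1 ++ (size (edges G), z) :: t2, walk G x t1,
                      nrm e = nrm (path_end x t1, z) & walk G z t2].
Proof.
move=> w u ht; case: (split_find ht) w u => -[n z] t1 t2 /eqP /= -> nh1.
rewrite cat_rcons walk_cat /= edge_at_add_edge_last => /andP [w1].
move=> /and3P [_ /eqP ez w2] u.
exists t1, z, t2; split => //; first exact: walk_add_edge_inv w1 nh1.
refine (walk_add_edge_inv w2 _); apply/hasP => -[[n' z'] in2 /eqP /= en'].
move: w2 u; case/splitPr: in2 => t3 t4.
rewrite walk_cat en' /= edge_at_add_edge_last => /andP [_ /and3P [_ /eqP ez' _]] u.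
have : uniq ((x :: map snd t1) ++ z :: map snd t3 ++ z' :: map snd t4).
  by move: u; rewrite map_cat /= map_cat.
rewrite cat_uniq => /and3P [_ /negP hd hu].
case: (nrm_eq (etrans (esym ez) ez')) => -[ez1 ez2].
- by move: hu; rewrite /= mem_cat inE ez2 eqxx orbT.
- apply: hd; apply/hasP; exists z'; first by rewrite inE mem_cat inE eqxx !orbT.
  by rewrite -ez1 mem_last.
Qed.

Definition path_vertex p0 (s : seq (nat * nat)) c : nat := nth p0 (p0 :: map snd s) c.

Lemma path_end_vertex p0 s1 s2 : path_end p0 s1 = path_vertex p0 (s1 ++ s2) (size s1).
Proof.
rewrite /path_vertex /path_end map_cat -cat_cons nth_cat /= size_map ltnSn.
by have := nth_last p0 (p0 :: map snd s1); rewrite /= size_map => ->.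
Qed.

Definition edge_lipschitz H (f : nat -> nat) : Prop :=
  forall j p q, j < size (edges H) -> nrm (edge_at H j) = nrm (p, q) -> f q <= (f p).+1.

Definition span_hi H p0 (s : seq (nat * nat)) u : nat := capped_dist H p0 u (size s).+1.
Definition span_lo H p0 (s : seq (nat * nat)) u : nat :=
  size s - capped_dist H u (path_end p0 s) (size s).+1.
Definition spans_meet H p0 (s : seq (nat * nat)) x y : bool :=
  (span_lo H p0 s y <= span_hi H p0 s x) && (span_lo H p0 s x <= span_hi H p0 s y).

Lemma span_lo_lipschitz H p0 s : edge_lipschitz H (span_lo H p0 s).
Proof.
move=> j p q hj he; rewrite /span_lo.
have := capped_dist_edgel (path_end p0 s) (size s).+1 hj he; lia.
Qed.

Section UniqueShortestPath.

Variables (H : graph) (p0 : nat) (s : seq (nat * nat)).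
Hypothesis usp_s : is_usp H p0 s.

Local Notation ad u := (capped_dist H p0 u (size s).+1).
Local Notation bd u := (capped_dist H u (path_end p0 s) (size s).+1).
Local Notation lo := (span_lo H p0 s).
Local Notation hi := (span_hi H p0 s).

Lemma usp_walk t : walk H p0 t -> path_end p0 t = path_end p0 s ->
  size t <= size s -> t = s.
Proof.
have [/and3P [hp0 _ _] uniq_s] := usp_s.
move=> w e st; have [t' [wt' et' ut' st' qt']] := walk_shorten w.
have ts : t' = s by apply: uniq_s; rewrite /is_path ?hp0 ?wt' ?ut' ?et' //; lia.
suff /qt' <- : size t' = size t by [].
by rewrite ts in st' *; lia.
Qed.

Lemma usp_walk_through u : ad u + bd u <= size s ->
  exists t1 t2, [/\ s = t1 ++ t2, path_end p0 t1 = u, size t1 = ad u & size t2 = bd u].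
Proof.
move=> h.
have [t1 [w1 e1 s1]] := @capped_distP H p0 u (size s).+1 ltac:(lia).
have [t2 [w2 e2 s2]] := @capped_distP H u (path_end p0 s) (size s).+1 ltac:(lia).
exists t1, t2; split => //; apply/esym/usp_walk.
- by rewrite walk_cat w1 e1.
- by rewrite path_end_cat e1.
- by rewrite size_cat s1 s2.
Qed.

Lemma dist_sum_ge u : size s <= ad u + bd u.
Proof.
rewrite leqNgt; apply/negP => h.
have [t1 [t2 [st _ s1 s2]]] := usp_walk_through (ltnW h).
by have := congr1 size st; rewrite size_cat s1 s2; lia.
Qed.

Lemma dist_sum_tight u : ad u + bd u = size s -> u = path_vertex p0 s (ad u).
Proof.
move=> h; have [t1 [t2 [-> <- <- _]]] := usp_walk_through (eq_leq h).
exact: path_end_vertex.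
Qed.

Lemma span_lo_le_hi u : lo u <= hi u.
Proof. by have := dist_sum_ge u; rewrite /span_lo /span_hi; lia. Qed.

(* Swapping the c-th edge of s for a parallel edge j gives a path with the same
   vertices; since uniqueness distinguishes parallel edges, j is that edge. *)
Lemma usp_edge_on_path c j : c < size s -> j < size (edges H) ->
  nrm (edge_at H j) = nrm (path_vertex p0 s c, path_vertex p0 s c.+1) ->
  j = (nth (0, 0) s c).1.
Proof.
move=> hc hj he.
have es : s = take c s ++ nth (0, 0) s c :: drop c.+1 s.
  by rewrite -drop_nth // cat_take_drop.
have hsz : size (take c s) = c by rewrite size_take hc.
set t := take c s ++ (j, (nth (0, 0) s c).2) :: drop c.+1 s.
have mt : map snd t = map snd s by rewrite [in RHS]es /t !map_cat.
have hpc : path_end p0 (take c s) = path_vertex p0 s c.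
  by rewrite (path_end_vertex _ _ (nth (0, 0) s c :: drop c.+1 s)) -es hsz.
have hpc1 : (nth (0, 0) s c).2 = path_vertex p0 s c.+1.
  by rewrite /path_vertex /= (nth_map (0, 0)).
have wt : walk H p0 t.
  have [/and3P [_ ws _] _] := usp_s.
  rewrite /t walk_cat; move: ws; rewrite {1}es walk_cat => /andP [-> /=].
  by case: (nth (0, 0) s c) hpc1 => a b /= -> /and3P [_ _ ->]; rewrite hj hpc he eqxx.
have := usp_walk wt; rewrite /path_end mt /t size_cat /= size_drop hsz => /(_ erefl).
move=> /(_ ltac:(lia)) /(congr1 (fun l => nth (0, 0) l c)).
by rewrite nth_cat hsz ltnn subnn => <-.
Qed.

Lemma path_edge_of_spans_apart j x y : j < size (edges H) ->
  nrm (edge_at H j) = nrm (x, y) -> ~~ spans_meet H p0 s x y ->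
  exists2 c, j = (nth (0, 0) s c).1 &
    [/\ lo x = c, hi x = c, lo y = c.+1 & hi y = c.+1] \/
    [/\ lo y = c, hi y = c, lo x = c.+1 & hi x = c.+1].
Proof.
move=> hj he; rewrite /spans_meet negb_and -!ltnNge.
wlog apart : x y he / hi x < lo y.
  move=> hw /orP [h | h]; first by apply: hw => //; rewrite h.
  have [c hc hcase] := hw y x ltac:(by rewrite nrm_sym) h ltac:(by rewrite h).
  by exists c => //; rewrite or_comm.
move=> _; move: apart; rewrite /span_lo /span_hi.
have l1 := capped_dist_edger p0 (size s).+1 hj he.
have l2 := capped_dist_edger p0 (size s).+1 hj (etrans he (nrm_sym x y)).
have l3 := capped_dist_edgel (path_end p0 s) (size s).+1 hj he.
have l4 := capped_dist_edgel (path_end p0 s) (size s).+1 hj (etrans he (nrm_sym x y)).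
have g1 := dist_sum_ge x; have g2 := dist_sum_ge y => apart.
have t1 : ad x + bd x = size s by lia.
have t2 : ad y + bd y = size s by lia.
have a2 : ad y = (ad x).+1 by lia.
exists (ad x); last by left; split; lia.
apply: usp_edge_on_path; first lia; first done.
by rewrite he -a2 -(dist_sum_tight t1) -(dist_sum_tight t2).
Qed.

Lemma usp_add_edge x y : spans_meet H p0 s x y -> is_usp (add_edge H (x, y)) p0 s.
Proof.
have [/and3P [hp0 ws us] uniq_s] := usp_s.
move=> /andP [mx my]; split; first by rewrite /is_path hp0 walk_add_edge.
move=> t /and3P [_ wt ut] et st.
case ht: (has (uses_edge (size (edges H))) t); last first.
  by apply: uniq_s; rewrite // /is_path hp0 ut (walk_add_edge_inv wt) ?ht.
have [t1 [z [t2 [tE w1 exz w2]]]] := path_add_edge_split wt ut ht.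
have ea := capped_dist_le_walk (size s).+1 w1.
have eb := capped_dist_le_walk (size s).+1 w2.
have e2 : path_end z t2 = path_end p0 s by rewrite -et tE path_end_cat path_end_cons.
rewrite e2 in eb.
move: st mx my; rewrite tE size_cat /= /span_lo /span_hi.
by case: (nrm_eq exz) => -[-> ->]; lia.
Qed.

End UniqueShortestPath.

Definition gapfree (S : nat -> Prop) : Prop :=
  forall k1 k k2, S k1 -> S k2 -> k1 <= k <= k2 -> S k.

Lemma gapfree_union (S T : nat -> Prop) r r' : gapfree S -> gapfree T -> S r -> T r' ->
  r <= r'.+1 -> r' <= r.+1 -> gapfree (fun k => S k \/ T k).
Proof.
move=> gS gT Sr Tr' h1 h2 k1 k k2 [S1|T1] [S2|T2] hk.
- by left; apply: (gS k1 k k2).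
- case: (leqP k r) => hkr; first by left; apply: (gS k1 k r) => //; lia.
  by right; apply: (gT r' k k2) => //; lia.
- case: (leqP k r') => hkr; first by right; apply: (gT k1 k r') => //; lia.
  by left; apply: (gS r k k2) => //; lia.
- by right; apply: (gT k1 k k2).
Qed.

Lemma gapfree_disjoint_crossing_uniq (S T : nat -> Prop) p1 q1 p2 q2 c1 c2 :
  gapfree S -> gapfree T -> (forall k, S k -> T k -> False) ->
  S p1 -> T q1 -> S p2 -> T q2 ->
  p1 = c1 /\ q1 = c1.+1 \/ p1 = c1.+1 /\ q1 = c1 ->
  p2 = c2 /\ q2 = c2.+1 \/ p2 = c2.+1 /\ q2 = c2 -> c1 = c2.
Proof.
move=> gS gT dj Sp1 Tq1 Sp2 Tq2 h1 h2.
wlog lt : p1 q1 p2 q2 c1 c2 Sp1 Tq1 Sp2 Tq2 h1 h2 / c1 < c2.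
  move=> hw; case: (ltngtP c1 c2) => [lt|lt|//].
  - exact: (hw p1 q1 p2 q2).
  - exact/esym/(hw p2 q2 p1 q1).
exfalso; apply: (dj c1.+1).
- case: h1 => -[e _]; last by rewrite -e.
  by apply: (gS p1 _ p2) => //; case: h2 => -[-> _]; lia.
- case: h1 => -[_ e]; first by rewrite -e.
  by apply: (gT q1 _ q2) => //; case: h2 => -[_ ->]; lia.
Qed.

Definition branch_cover (lo hi phi : nat -> nat) (alive : nat -> bool) X k : Prop :=
  exists u, [/\ alive u, phi u = X & lo u <= k <= hi u].

(* A model of the minor K inside H: every alive vertex u of H lies in the
   branch set of the vertex phi u of K, edge k of K is the image of edge o k
   of H, and adding an edge between two branch sets commutes with the minor
   operations (model_lift). *)
Record branch_model (H K : graph) (lo hi phi : nat -> nat) (alive : nat -> bool)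
    (o : nat -> nat) : Prop := {
  model_alive : forall u, alive u -> u < nv H /\ phi u < nv K;
  model_edge : forall k, k < size (edges K) -> [/\ o k < size (edges H),
    alive (edge_at H (o k)).1, alive (edge_at H (o k)).2 &
    emap phi (edge_at H (o k)) = edge_at K k];
  model_edge_inj : forall k k', k < size (edges K) -> k' < size (edges K) ->
    o k = o k' -> k = k';
  model_loopless : forall k, k < size (edges K) -> (edge_at K k).1 != (edge_at K k).2;
  model_gapfree : forall X, gapfree (branch_cover lo hi phi alive X);
  model_lift : forall u u', alive u -> alive u' -> phi u != phi u' ->
    minor_steps (add_edge H (u, u')) (add_edge K (phi u, phi u'))
}.

Lemma branch_model_refl H lo hi : wf H -> branch_model H H lo hi id (gtn (nv H)) id.
Proof.
move=> hw; split.
- by [].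
- move=> k hk; have [h1 h2 _] := wf_edge hw hk; split => //.
  by case: (edge_at H k).
- by [].
- by move=> k hk; have [] := wf_edge hw hk.
- move=> X k1 k k2 [u [au <- h1]] [u' [_ eu' h2]] hk.
  rewrite /= in eu'; subst u'.
  by exists u; split => //; lia.
- by move=> u u' _ _ _; apply: MSS_refl.
Qed.

Lemma dn_lt v x n : v < n -> x < n -> x != v -> dn v x < n.-1.
Proof. rewrite /dn; case: ifP => h hv hx /eqP hxv; lia. Qed.

Lemma dn_inj v x y : x != v -> y != v -> dn v x = dn v y -> x = y.
Proof. rewrite /dn => /eqP h1 /eqP h2; case: ifP; case: ifP; lia. Qed.

Definition merge (a b x : nat) : nat := dn b (if x == b then a else x).

Lemma contractE K i : contract K i =
  Graph (nv K).-1 (map (emap (merge (edge_at K i).1 (edge_at K i).2)) (rem_at i (edges K))).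
Proof. by []. Qed.

Lemma merge_collision a b x y : a != b -> x != y -> merge a b x = merge a b y ->
  (x = a /\ y = b) \/ (x = b /\ y = a).
Proof.
rewrite /merge => hab hxy.
case: (eqVneq x b) => hx; case: (eqVneq y b) => hy.
- by move: hxy; rewrite hx hy eqxx.
- by move=> /(dn_inj hab hy) ->; right.
- by move=> /esym /(dn_inj hab hx) ->; left.
- by move=> /(dn_inj hx hy) /eqP; rewrite (negbTE hxy).
Qed.

Lemma merge_lt a b x n : a < n -> b < n -> a != b -> x < n -> merge a b x < n.-1.
Proof.
move=> ha hb hab hx; rewrite /merge; apply: dn_lt => //; first by case: ifP.
by case: ifP => // /negbT.
Qed.

Lemma intervals_near a b c d : a <= b -> c <= d -> a <= d.+1 -> c <= b.+1 ->
  exists r r', [/\ a <= r <= b, c <= r' <= d, r <= r'.+1 & r' <= r.+1].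
Proof.
move=> *; case: (ltnP b c) => h1; first by exists b, c; split; lia.
case: (ltnP d a) => h2; first by exists a, d; split; lia.
by exists (maxn a c), (maxn a c); split; lia.
Qed.

Lemma gapfree_cover_merge lo hi phi alive (f : nat -> nat) a b r r' :
  (forall X, gapfree (branch_cover lo hi phi alive X)) ->
  (forall x y, x != y -> f x = f y -> (x = a /\ y = b) \/ (x = b /\ y = a)) ->
  branch_cover lo hi phi alive a r -> branch_cover lo hi phi alive b r' ->
  r <= r'.+1 -> r' <= r.+1 ->
  forall Z, gapfree (branch_cover lo hi (f \o phi) alive Z).
Proof.
move=> ig coll Sr Tr' h1 h2 Z k1 k k2 [u1 [a1 e1 r1]] [u2 [a2 e2 r2]] hk.
suff : branch_cover lo hi phi alive (phi u1) k \/ branch_cover lo hi phi alive (phi u2) k.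
  by case=> -[u3 [a3 e3 r3]]; exists u3; split => //=; rewrite e3.
case: (eqVneq (phi u1) (phi u2)) => hne.
  by left; apply: (ig _ k1 k k2) => //; [exists u1 | exists u2; rewrite hne].
have g := gapfree_union (ig a) (ig b) Sr Tr' h1 h2.
have c1 : branch_cover lo hi phi alive (phi u1) k1 by exists u1.
have c2 : branch_cover lo hi phi alive (phi u2) k2 by exists u2.
case: (coll _ _ hne (etrans e1 (esym e2))) => -[ea eb]; rewrite ea eb in c1 c2 *.
- exact: (g k1 k k2 (or_introl c1) (or_intror c2) hk).
- by case: (g k1 k k2 (or_intror c1) (or_introl c2) hk); [right | left].
Qed.

Lemma mult1_no_parallel K i k : i < size (edges K) -> k < size (edges K) -> k != i ->
  mult K i = 1 -> nrm (edge_at K k) != nrm (edge_at K i).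
Proof.
move=> hi hk hki hm; apply/eqP => he.
suff : 1 < mult K i by rewrite hm.
by apply/(count_gt1_nthP (0, 0)); exists k, i; rewrite -/(edge_at K k) he eqxx.
Qed.

Lemma size_del_edge K i : i < size (edges K) ->
  size (edges (del_edge K i)) = (size (edges K)).-1.
Proof. exact: size_rem_at. Qed.

Lemma edge_at_del_edge K i k : i < size (edges K) ->
  edge_at (del_edge K i) k = edge_at K (bump i k).
Proof. exact: nth_rem_at. Qed.

Lemma add_edge_del_edge K i e : i < size (edges K) ->
  add_edge (del_edge K i) e = del_edge (add_edge K e) i.
Proof. by move=> hi; rewrite /del_edge /add_edge /= rem_at_rcons. Qed.

Lemma add_edge_del_vertex K v x y :
  add_edge (del_vertex K v) (dn v x, dn v y) = del_vertex (add_edge K (x, y)) v.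
Proof. by rewrite /del_vertex /add_edge /= map_rcons. Qed.

Lemma size_contract K i : i < size (edges K) ->
  size (edges (contract K i)) = (size (edges K)).-1.
Proof. by move=> hi; rewrite contractE /= size_map size_rem_at. Qed.

Lemma edge_at_contract K i k : i < size (edges K) -> k < (size (edges K)).-1 ->
  edge_at (contract K i) k = emap (merge (edge_at K i).1 (edge_at K i).2) (edge_at K (bump i k)).
Proof.
move=> hi hk; rewrite /edge_at contractE /= (nth_map (0, 0)) ?nth_rem_at //.
by rewrite size_rem_at.
Qed.

Lemma add_edge_contract K i x y : i < size (edges K) ->
  let m := merge (edge_at K i).1 (edge_at K i).2 in
  add_edge (contract K i) (m x, m y) = contract (add_edge K (x, y)) i.
Proof.
move=> hi; rewrite !contractE /edge_at /= nth_rcons hi.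
by rewrite /add_edge rem_at_rcons // map_rcons.
Qed.

Lemma mult_add_edge K e i : i < size (edges K) ->
  mult (add_edge K e) i = mult K i + (nrm e == nrm (edge_at K i)).
Proof. by move=> hi; rewrite /mult edge_at_add_edge //= -cats1 count_cat /= addn0. Qed.

Lemma contract_loopless K i k : i < size (edges K) -> mult K i = 1 ->
  (forall k, k < size (edges K) -> (edge_at K k).1 != (edge_at K k).2) ->
  k < size (edges (contract K i)) -> (edge_at (contract K i) k).1 != (edge_at (contract K i) k).2.
Proof.
move=> hi hm il hk; have hk' : bump i k < size (edges K).
  by move: hk; rewrite size_contract //; apply: bump_ltn.
rewrite edge_at_contract //=; last by rewrite -(size_contract hi).
have := il _ hk'.
case E: (edge_at K _) => [p q] /= hpq; apply/negP.
move=> /eqP /(merge_collision (il i hi) hpq) h.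
have kne : bump i k != i by rewrite eq_sym neq_bump.
have := mult1_no_parallel hi hk' kne hm; rewrite E [edge_at K i]surjective_pairing.
by case: h => -[-> ->]; rewrite ?eqxx // nrm_sym eqxx.
Qed.

Section BranchModelSteps.

Variables (H K : graph) (lo hi phi : nat -> nat) (alive : nat -> bool) (o : nat -> nat).
Hypothesis model : branch_model H K lo hi phi alive o.

Lemma branch_model_del_edge i : i < size (edges K) ->
  branch_model H (del_edge K i) lo hi phi alive (o \o bump i).
Proof.
move: model => [ia ie ii il ig il2] hi0.
have kk k : k < size (edges (del_edge K i)) -> bump i k < size (edges K).
  by rewrite size_del_edge //; apply: bump_ltn.
split => //.
- by move=> k hk; rewrite edge_at_del_edge //; apply: ie (kk k hk).
- by move=> k k' hk hk' /(ii _ _ (kk k hk) (kk k' hk')) /(can_inj (bumpK i)).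
- by move=> k hk; rewrite edge_at_del_edge //; apply: il (kk k hk).
- move=> u u' hu hu' hne; apply: (MSS_step (il2 u u' hu hu' hne)).
  rewrite add_edge_del_edge //; apply: MS_del_edge.
  by rewrite /= size_rcons; lia.
Qed.

Lemma branch_model_del_vertex v : v < nv K -> 1 < nv K -> isolated K v ->
  branch_model H (del_vertex K v) lo hi (dn v \o phi) (fun u => alive u && (phi u != v)) o.
Proof.
move: model => [ia ie ii il ig il2] hv h1 hiso.
have iso k : k < size (edges K) -> (edge_at K k).1 != v /\ (edge_at K k).2 != v.
  by move=> hk; move: hiso => /(all_nthP (0, 0)) /(_ k hk) /andP.
have ea k : k < size (edges K) -> edge_at (del_vertex K v) k = emap (dn v) (edge_at K k).
  by move=> hk; rewrite /edge_at /= (nth_map (0, 0)).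
have sz : size (edges (del_vertex K v)) = size (edges K) by rewrite /= size_map.
split; rewrite ?sz.
- move=> u /andP [hu hne]; have [h2 h3] := ia u hu; split => //=.
  exact: dn_lt.
- move=> k hk; have [h2 h3 h4 h5] := ie k hk; have [n1 n2] := iso k hk.
  rewrite h3 h4 ea // -h5 /=; split => //.
  + by move: n1; rewrite -h5.
  + by move: n2; rewrite -h5.
- exact: ii.
- move=> k hk; rewrite ea //=.
  have [n1 n2] := iso k hk; have := il k hk.
  by apply: contra => /eqP /(dn_inj n1 n2) ->.
- move=> X k1 k k2 [u1 [/andP [a1 n1] /= e1 r1]] [u2 [/andP [a2 n2] /= e2 r2]] hk.
  have e12 : phi u1 = phi u2 by apply: (dn_inj n1 n2); rewrite e1 e2.
  have [u3 [a3 e3 r3]] : branch_cover lo hi phi alive (phi u1) k.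
    by apply: (ig _ k1 k k2) => //; [exists u1 | exists u2; rewrite e12].
  by exists u3; rewrite a3 /= e3 n1 -e1; split.
- move=> u u' /andP [a1 n1] /andP [a2 n2] /= hne.
  have hne' : phi u != phi u' by apply: contra hne => /eqP ->.
  apply: (MSS_step (il2 u u' a1 a2 hne')).
  rewrite add_edge_del_vertex; apply: MS_del_vertex => //.
  by rewrite /isolated /= all_rcons /= n1 n2.
Qed.

Hypothesis lo_le_hi : forall u, lo u <= hi u.
Hypothesis lo_lipschitz : edge_lipschitz H lo.

Lemma branch_model_contract i : i < size (edges K) -> mult K i = 1 ->
  let m := merge (edge_at K i).1 (edge_at K i).2 in
  branch_model H (contract K i) lo hi (m \o phi) alive (o \o bump i).
Proof.
move: model => [ia ie ii il ig il2] hi0 hm m.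
set a0 := (edge_at K i).1 in m *; set b0 := (edge_at K i).2 in m *.
have hab : a0 != b0 := il i hi0.
have [oi ha hb eo] := ie i hi0.
have ea0 : phi (edge_at H (o i)).1 = a0 by rewrite /a0 -eo.
have eb0 : phi (edge_at H (o i)).2 = b0 by rewrite /b0 -eo.
have kk k : k < size (edges (contract K i)) -> bump i k < size (edges K).
  by rewrite size_contract //; apply: bump_ltn.
have ea k : k < size (edges (contract K i)) ->
    edge_at (contract K i) k = emap m (edge_at K (bump i k)).
  by move=> hk; rewrite edge_at_contract // -(size_contract hi0).
split.
- have [_ a0n] := ia _ ha; have [_ b0n] := ia _ hb; rewrite ea0 in a0n; rewrite eb0 in b0n.
  move=> u hu; have [h1 h2] := ia u hu; split => //.
  by rewrite contractE; apply: merge_lt.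
- move=> k hk; have [h2 h3 h4 h5] := ie _ (kk k hk).
  by split => //; rewrite ea // -h5.
- by move=> k k' hk hk' /(ii _ _ (kk k hk) (kk k' hk')) /(can_inj (bumpK i)).
- by move=> k; apply: contract_loopless.
- have e1 : nrm (edge_at H (o i)) = nrm ((edge_at H (o i)).1, (edge_at H (o i)).2).
    by rewrite -surjective_pairing.
  have l1 := lo_lipschitz oi e1; have l2 := lo_lipschitz oi (etrans e1 (nrm_sym _ _)).
  have h1 := lo_le_hi (edge_at H (o i)).1; have h2 := lo_le_hi (edge_at H (o i)).2.
  (* lo moves by at most one along the contracted edge, so its ends have touching spans *)
  have [r [r' [hr hr' t1 t2]]] := intervals_near h1 h2 ltac:(lia) ltac:(lia).
  apply: (gapfree_cover_merge (a := a0) (b := b0) ig _ _ _ t1 t2).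
  + by move=> x y hxy; apply: merge_collision.
  + by exists (edge_at H (o i)).1.
  + by exists (edge_at H (o i)).2.
- move=> u u' hu hu' /= hne.
  have hne' : phi u != phi u' by apply: contra hne => /eqP ->.
  apply: (MSS_step (il2 u u' hu hu' hne')).
  rewrite add_edge_contract //; apply: MS_contract; first by rewrite /= size_rcons; lia.
  rewrite mult_add_edge // hm; suff /negbTE -> : nrm (phi u, phi u') != nrm (edge_at K i) by [].
  apply/eqP; rewrite [edge_at K i]surjective_pairing -/a0 -/b0 => /nrm_eq h.
  by move/negP: hne; apply; case: h => -[-> ->]; rewrite /m /merge eqxx (negbTE hab).
Qed.

End BranchModelSteps.

Lemma branch_model_exists H L lo hi : wf H -> (forall u, lo u <= hi u) ->
  edge_lipschitz H lo ->
  minor_steps H L -> exists phi alive o, branch_model H L lo hi phi alive o.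
Proof.
move=> hw hlh llo; elim => [|K L' _ [phi [alive [o IH]]] st].
  by exists id, (gtn (nv H)), id; apply: branch_model_refl.
case: st.
- by move=> v hv h1 hiso; have := branch_model_del_vertex IH hv h1 hiso; eauto.
- by move=> i hi0; have := branch_model_del_edge IH hi0; eauto.
- by move=> i hi0 hm; have := branch_model_contract IH hlh llo hi0 hm; eauto.
Qed.

Lemma model_edge_ends H K lo hi phi alive o k : branch_model H K lo hi phi alive o ->
  k < size (edges K) -> (edge_at K k).1 < nv K /\ (edge_at K k).2 < nv K.
Proof.
move=> model hk; have [_ a1 a2 <-] := model_edge model hk.
by split; [have [] := model_alive model a1 | have [] := model_alive model a2].
Qed.

Section SpansInModel.

Variables (H : graph) (p0 : nat) (s : seq (nat * nat)) (K : graph).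
Variables (phi : nat -> nat) (alive : nat -> bool) (o : nat -> nat).
Hypothesis usp_s : is_usp H p0 s.
Hypothesis model : branch_model H K (span_lo H p0 s) (span_hi H p0 s) phi alive o.

Local Notation cover := (branch_cover (span_lo H p0 s) (span_hi H p0 s) phi alive).

Lemma model_edge_crossing k X Y :
  (forall x y, alive x -> alive y -> phi x = X -> phi y = Y -> ~~ spans_meet H p0 s x y) ->
  k < size (edges K) -> nrm (edge_at K k) = nrm (X, Y) ->
  exists c p q, [/\ o k = (nth (0, 0) s c).1, cover X p, cover Y q &
                    p = c /\ q = c.+1 \/ p = c.+1 /\ q = c].
Proof.
move=> apart hk hXY; have [ok ha hb he] := model_edge model hk.
set a := (edge_at H (o k)).1 in ha he *; set b := (edge_at H (o k)).2 in hb he *.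
have eab : nrm (edge_at H (o k)) = nrm (a, b) by rewrite -surjective_pairing.
have : nrm (phi a, phi b) = nrm (X, Y) by rewrite -hXY -he.
case/nrm_eq => -[ea eb].
- have [c hc hcase] := path_edge_of_spans_apart usp_s ok eab (apart a b ha hb ea eb).
  exists c; case: hcase => -[l1 h1 l2 h2]; [exists c, c.+1 | exists c.+1, c];
    by split => //; [exists a | exists b | tauto]; split => //; lia.
- have eba : nrm (edge_at H (o k)) = nrm (b, a) by rewrite eab nrm_sym.
  have [c hc hcase] := path_edge_of_spans_apart usp_s ok eba (apart b a hb ha eb ea).
  exists c; case: hcase => -[l1 h1 l2 h2]; [exists c, c.+1 | exists c.+1, c];
    by split => //; [exists b | exists a | tauto]; split => //; lia.
Qed.

Lemma model_spans_meet k1 k2 X Y : k1 < size (edges K) -> k2 < size (edges K) -> k1 != k2 ->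
  nrm (edge_at K k1) = nrm (X, Y) -> nrm (edge_at K k2) = nrm (X, Y) ->
  exists x y, [/\ alive x, alive y, phi x = X, phi y = Y & spans_meet H p0 s x y].
Proof.
move=> hk1 hk2 hk12 e1 e2; apply: contrapT => none.
have apart x y : alive x -> alive y -> phi x = X -> phi y = Y -> ~~ spans_meet H p0 s x y.
  by move=> ax ay ex ey; apply/negP => m; apply: none; exists x, y.
have disj k : cover X k -> cover Y k -> False.
  move=> [x [ax ex rx]] [y [ay ey ry]]; move: (apart x y ax ay ex ey).
  by rewrite /spans_meet negb_and -!ltnNge => /orP []; lia.
have [c1 [p1 [q1 [j1 S1 T1 r1]]]] := model_edge_crossing apart hk1 e1.
have [c2 [p2 [q2 [j2 S2 T2 r2]]]] := model_edge_crossing apart hk2 e2.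
have gX : gapfree (cover X) := @model_gapfree _ _ _ _ _ _ _ model X.
have gY : gapfree (cover Y) := @model_gapfree _ _ _ _ _ _ _ model Y.
have c12 := gapfree_disjoint_crossing_uniq gX gY disj S1 T1 S2 T2 r1 r2.
by move/eqP: hk12; apply; apply: (model_edge_inj model hk1 hk2); rewrite j1 j2 c12.
Qed.

End SpansInModel.

Lemma usp_attained G : 0 < nv G -> exists x s, is_usp G x s /\ usp G = (size s).+1.
Proof.
move=> hn.
pose P := fun k : 'I_(nv G).+1 => `[< exists x s, is_usp G x s /\ (size s).+1 = k >].
have h0 : 0 < #|P|.
  rewrite lt0n; apply/existsP; exists (Ordinal (n := (nv G).+1) (m := 1) ltac:(lia)).
  apply/asboolP; exists 0, [::]; split => //; split; first by rewrite /is_path hn.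
  by move=> [|? ?].
have [i0 Pi0 e] := eq_bigmax_cond (fun k : 'I_(nv G).+1 => nat_of_ord k) h0.
move: Pi0; rewrite /P unfold_in => /asboolP [x [s [hu hs]]].
by exists x, s; split => //; rewrite hs -e /usp; apply: eq_bigl => k; rewrite /P unfold_in.
Qed.

Lemma usp_ge G x s : is_usp G x s -> (size s).+1 <= nv G -> (size s).+1 <= usp G.
Proof.
move=> hu hs; rewrite /usp.
apply: (bigmax_sup (Ordinal (n := (nv G).+1) (m := (size s).+1) ltac:(lia))) => //=.
by apply/asboolP; exists x, s.
Qed.

Lemma usp_le_nv G : usp G <= nv G.
Proof. by rewrite /usp; apply/bigmax_leqP => i _; rewrite -ltnS. Qed.

Lemma sp_add_edge_le H p0 s x y : is_usp H p0 s -> usp H = (size s).+1 ->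
  spans_meet H p0 s x y -> sp (add_edge H (x, y)) <= sp H.
Proof.
move=> usp_s hs meet; rewrite /sp leq_sub2l // hs.
by apply: usp_ge (usp_add_edge usp_s meet) _; rewrite /= -hs usp_le_nv.
Qed.

(* iso G1 G2 is convertible to exists f, iso_by f G1 G2. *)
Definition iso_by (f : nat -> nat) (G1 G2 : graph) : Prop :=
  [/\ nv G1 = nv G2, {in gtn (nv G1) &, injective f}, {in gtn (nv G1), forall x, f x < nv G2} &
      perm_eq (map (fun e => nrm (emap f e)) (edges G1)) (map nrm (edges G2))].

Lemma count_del_edge G i (P : pred (nat * nat)) : i < size (edges G) ->
  count P (edges G) = P (edge_at G i) + count P (edges (del_edge G i)).
Proof. by move=> hi; have := permP (perm_rem_at id hi) P; rewrite !map_id. Qed.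

Lemma iso_by_count f K G E : iso_by f K G ->
  count (fun e => nrm (emap f e) == E) (edges K) = count (fun e => nrm e == E) (edges G).
Proof. by case=> _ _ _ /permP /(_ (pred1 E)); rewrite !count_map. Qed.

Lemma nrm_emap_inj f n a b : {in gtn n &, injective f} ->
  a.1 < n -> a.2 < n -> b.1 < n -> b.2 < n ->
  nrm (emap f a) = nrm (emap f b) -> nrm a = nrm b.
Proof.
move=> finj; case: a b => [a1 a2] [b1 b2] /= ha1 ha2 hb1 hb2.
have inj x y : x < n -> y < n -> f x = f y -> x = y by move=> hx hy; apply: finj.
case/nrm_eq => -[e1 e2].
- by rewrite (inj _ _ ha1 hb1 e1) (inj _ _ ha2 hb2 e2).
- by rewrite (inj _ _ ha1 hb2 e1) (inj _ _ ha2 hb1 e2) nrm_sym.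
Qed.

Lemma iso_by_add_edge f K G i e : iso_by f K (del_edge G i) -> i < size (edges G) ->
  nrm (emap f e) = nrm (edge_at G i) -> iso_by f (add_edge K e) G.
Proof.
move=> [hn finj frng fperm] hi he; split => //.
rewrite /= map_rcons perm_rcons he perm_sym.
by apply: perm_trans (perm_rem_at nrm hi) _; rewrite perm_cons perm_sym.
Qed.

Lemma minor_refl G : minor G G.
Proof. by exists G; split; [apply: MSS_refl | exists id; split]. Qed.

Lemma minor_del_edge G H j : minor G H -> j < size (edges G) -> minor (del_edge G j) H.
Proof.
move=> [K [HK [f [hn finj frng fperm]]]] hj.
have : nrm (edge_at G j) \in map (fun e => nrm (emap f e)) (edges K).
  by rewrite (perm_mem fperm); apply: map_f; apply: mem_nth.
case/mapP => e ein eE; set jK := index e (edges K).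
have hjK : jK < size (edges K) by rewrite index_mem.
exists (del_edge K jK); split; first exact: MSS_step HK (MS_del_edge hjK).
exists f; split => //=; rewrite -(perm_cons (nrm (edge_at G j))).
apply: perm_trans (perm_trans fperm (perm_rem_at nrm hj)).
by rewrite perm_sym eE -(nth_index (0, 0) ein); apply: perm_rem_at.
Qed.

Lemma minor_add_parallel_edge G i H : i < size (edges G) ->
  2 < count (fun e => nrm e == nrm (edge_at G i)) (edges G) ->
  wf H -> minor (del_edge G i) H -> exists2 H', wf H' /\ minor G H' & sp H' <= sp H.
Proof.
move=> hi hc wH [K [HK [f isoK]]].
have [p0 [s [usp_s hs]]] := usp_attained (proj1 wH).
have [phi [alive [o model]]] :=
  branch_model_exists wH (span_lo_le_hi usp_s) (@span_lo_lipschitz H p0 s) HK.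
have [k1 [k2 [hk1 hk2 hk12 e1 e2]]] : exists k1 k2, [/\ k1 < size (edges K),
    k2 < size (edges K), k1 != k2, nrm (emap f (edge_at K k1)) == nrm (edge_at G i)
    & nrm (emap f (edge_at K k2)) == nrm (edge_at G i)].
  apply/(count_gt1_nthP (0, 0) (fun e => nrm (emap f e) == nrm (edge_at G i))).
  rewrite (iso_by_count _ isoK).
  by move: hc; rewrite (count_del_edge _ hi) eqxx.
set X := (edge_at K k1).1; set Y := (edge_at K k1).2.
have eXY k : k < size (edges K) -> nrm (emap f (edge_at K k)) == nrm (edge_at G i) ->
    nrm (edge_at K k) = nrm (X, Y).
  have [_ finj _ _] := isoK; move=> hk /eqP ek.
  have [k1a k1b] := model_edge_ends model hk1; have [ka kb] := model_edge_ends model hk.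
  by apply: (nrm_emap_inj finj) => //; rewrite ek -(eqP e1) -surjective_pairing.
have [x [y [ax ay ex ey meet]]] :=
  model_spans_meet usp_s model hk1 hk2 hk12 (eXY _ hk1 e1) (eXY _ hk2 e2).
have XY : X != Y := model_loopless model hk1.
have xy : x != y by apply: contraNneq XY => exy; rewrite -ex -ey exy.
have [[xn _] [yn _]] := (model_alive model ax, model_alive model ay).
exists (add_edge H (x, y)); last exact: sp_add_edge_le usp_s hs meet.
split; first exact: wf_add_edge.
exists (add_edge K (X, Y)); split.
  by have := model_lift model ax ay; rewrite ex ey; apply.
by exists f; apply: iso_by_add_edge isoK hi (eqP e1 : nrm (emap f (X, Y)) = _).
Qed.

Lemma sp_floor_le G G' : wf G' ->
  (forall H, wf H -> minor G' H -> exists2 H', wf H' /\ minor G H' & sp H' <= sp H) ->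
  sp_floor G <= sp_floor G'.
Proof.
move=> wG' lift; rewrite {2}/sp_floor; case: ex_minnP => m hm _.
have [H [wH mH <-]] : exists H, [/\ wf H, minor G' H & sp H = m].
  case/orP: hm => [/asboolP [H [wH [mH <-]]] | /eqP ->]; first by exists H.
  by exists G'; split => //; apply: minor_refl.
have [H' [wH' mH'] le] := lift H wH mH.
rewrite /sp_floor; case: ex_minnP => m' _ /(_ (sp H')) min'.
by apply: leq_trans (min' _) le; apply/orP; left; apply/asboolP; exists H'.
Qed.

Theorem lemma6p9 (G : graph) (v w i : nat) :
  wf G ->
  i < size (edges G) ->
  nrm (edge_at G i) = nrm (v, w) ->
  3 <= count (fun e => nrm e == nrm (v, w)) (edges G) ->
  sp_floor (del_edge G i) = sp_floor G.
Proof.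
move=> wG hi hE hc; apply/eqP; rewrite eqn_leq; apply/andP; split.
- apply: sp_floor_le => // H wH mH.
  by exists H => //; split => //; apply: minor_del_edge.
- apply: sp_floor_le (wf_del_edge i wG) _ => H wH mH.
  by apply: (minor_add_parallel_edge hi) => //; rewrite hE.
Qed.
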